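(* Let $\epsilon\in(0,1)$ and $\epsilon'=\epsilon/14$. Run Algorithm $\mathsf{DLA}$ on $(f,V,B)$ with parameter $\epsilon$. Let $S$ be its output, and let $X,Y$ be the two sets at the end of its while-loop (Phase 1). Let $O$ be an optimal solution, $\mathrm{opt}=f(O)$, and let $r\in\arg\max_{o\in O}c(o)$. Suppose $c(r)\ge(1-\epsilon')B$. Then at least one of the following holds: (e) $f(S)\ge\frac{(1-\epsilon')^2}{6}\mathrm{opt}$; (f) there exists $X'\subseteq X$ with $f(O\cup X')\le 2f(S)+\max\left\{\frac{(1-\epsilon')\mathrm{opt}}{6},\ f(S)+\frac{\epsilon'\mathrm{opt}}{6}\right\}$. Likewise, at least one of the following holds: (g) $f(S)\ge\frac{(1-\epsilon')^2}{6}\mathrm{opt}$; (h) there exists $Y'\subseteq Y$ with $f(O\cup Y')\le 2f(S)+\max\left\{\frac{(1-\epsilon')\mathrm{opt}}{6},\ f(S)+\frac{\epsilon'\mathrm{opt}}{6}\right\}$.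
   Context: Setting: $V$ is a finite ground set of size $n$. $f:2^V\to\mathbb{R}_{\ge 0}$ is a non-negative submodular set function with $f(\emptyset)=0$. Each $e\in V$ has a cost $c(e)>0$, and $c(S)=\sum_{e\in S}c(e)$. $B>0$ is a budget, and $c(e)\le B$ for every $e\in V$. An optimal solution is $O\in\arg\max\{f(T):T\subseteq V,\ c(T)\le B\}$. The notation $f(e\mid S)=f(S\cup\{e\})-f(S)$ is used. Algorithm $\mathsf{LA}$ on $(f,V,B)$ runs as follows. Let $V_1=\{e:c(e)\le B/2\}$, $e_{\max}\in\arg\max_{e\in V}f(e)$ and $X=Y=\emptyset$. Process each $e\in V_1$ once. Among $Z\in\{X,Y\}$ with $f(e\mid Z)/c(e)\ge f(Z)/B$, add $e$ to one maximizing $f(e\mid Z)/c(e)$, if any such $Z$ exists. Then for $T\in\{X,Y\}$, let $T'$ be the largest-cost set formed by the last $j$ elements added to $T$ ($0\le j\le |T|$) among those with cost at most $B$. Return the best of $X'$, $Y'$ and $\{e_{\max}\}$ under $f$. Algorithm $\mathsf{DLA}$ on $(f,V,B)$ with parameter $\epsilon\in(0,1)$ runs as follows. 1. Let $S'$ be the output of $\mathsf{LA}(f,V,B)$ and set $\Gamma=f(S')$. Set $\epsilon'=\epsilon/14$ and $\Delta=\lceil\log(1/\epsilon')/\epsilon'\rceil$. 2. Phase 1. Set $\theta=19\Gamma/(6\epsilon' B)$ and $X=Y=\emptyset$. While $\theta\ge\Gamma(1-\epsilon')/(6B)$, do the following. Process each $e\in V\setminus(X\cup Y)$ in a fixed order.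 Among $T\in\{X,Y\}$ with $c(T\cup\{e\})\le B$ and $f(e\mid T)/c(e)\ge\theta$, choose one maximizing $f(e\mid T)/c(e)$; if such a $T$ exists, add $e$ to it. After the pass, set $\theta\leftarrow(1-\epsilon')\theta$. 3. Phase 2. For $T\in\{X,Y\}$, let $T^i$ be the set of the first $i$ elements added to $T$. For each $l=0,1,\dots,\Delta$: - let $X'_{(l)}=X^i$ for the largest $i\le|X|$ with $c(X^i)\le\epsilon'B(1+\epsilon')^l$; - let $e_X\in\arg\max\{f(X'_{(l)}\cup\{e\}): e\in V,\ c(X'_{(l)}\cup\{e\})\le B\}$, and set $X_{(l)}=X'_{(l)}\cup\{e_X\}$; - define $Y'_{(l)}$, $e_Y$ and $Y_{(l)}$ analogously from $Y$. 4. Return the set $S$ of maximum $f$ value among $S'$, $X$, $Y$, $X_{(0)},\dots,X_{(\Delta)}$, $Y_{(0)},\dots,Y_{(\Delta)}$. *)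

From mathcomp Require Import all_boot all_order all_algebra.
From mathcomp Require Import all_classical all_reals exp.
Set Implicit Arguments. Unset Strict Implicit. Unset Printing Implicit Defensive.
Import Order.TTheory GRing.Theory Num.Theory.
Local Open Scope ring_scope.

Section Algo.
Variables (R : realType) (T : finType).
Variables (f : {set T} -> R) (c : T -> R) (B : R).
Variable ord : seq T.
(* [tie X Y e] : tie-breaking rule (true = put e into X) used when both
   candidate sets give the same marginal density *)
Variable tie : seq T -> seq T -> T -> bool.

(* the ground set V is the whole finite type T *)
Definition cost (A : {set T}) : R := \sum_(e in A) c e.

Definition sset (s : seq T) : {set T} := [set x in s].

Definition bestf (g : {set T} -> R) (d : {set T}) (s : seq {set T}) : {set T} :=
  foldl (fun b A => if g b < g A then A else b) d s.

Definition argmax_set (g : {set T} -> R) (d : {set T}) (s : seq {set T}) :=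
  bestf g (head d s) (behead s).

Definition dens (X : seq T) (e : T) : R := (f (e |: sset X) - f (sset X)) / c e.

Definition choose_put (X Y : seq T) (e : T) (okX okY : bool) : seq T * seq T :=
  let gX := dens X e in let gY := dens Y e in
  if okX && okY then
    (if (gY < gX) || ((gX == gY) && tie X Y e) then (rcons X e, Y)
     else (X, rcons Y e))
  else if okX then (rcons X e, Y)
  else if okY then (X, rcons Y e)
  else (X, Y).

Definition la_step (st : seq T * seq T) (e : T) : seq T * seq T :=
  let: (X, Y) := st in
  if c e <= B / 2 then
    choose_put X Y e (f (sset X) / B <= dens X e) (f (sset Y) / B <= dens Y e)
  else (X, Y).

Definition la_loop : seq T * seq T := foldl la_step ([::], [::]) ord.

Definition la_tail (s : seq T) : {set T} :=
  argmax_set cost (finset.set0 : {set T})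
    [seq sset (drop (size s - j) s) | j <- iota 0 (size s).+1
        & cost (sset (drop (size s - j) s)) <= B].

Definition LA : {set T} :=
  argmax_set f (finset.set0 : {set T})
    ([:: la_tail la_loop.1; la_tail la_loop.2] ++ [seq [set e] | e <- enum T]).

Variable eps : R.
Definition eps' : R := eps / 14.
Definition Delta : nat := absz (Num.ceil (ln (1 / eps') / eps')).
Definition Gamma : R := f LA.

(* value of theta during the j-th pass (j = 0, 1, ...) *)
Definition theta (j : nat) : R := 19 * Gamma / (6 * eps' * B) * (1 - eps') ^+ j.
Definition theta_thr : R := Gamma * (1 - eps') / (6 * B).

Definition dla_step (th : R) (st : seq T * seq T) (e : T) : seq T * seq T :=
  let: (X, Y) := st in
  if (e \in X) || (e \in Y) then (X, Y) else
  choose_put X Y e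
    ((cost (e |: sset X) <= B) && (th <= dens X e))
    ((cost (e |: sset Y) <= B) && (th <= dens Y e)).

Definition dla_pass (th : R) (st : seq T * seq T) := foldl (dla_step th) st ord.

Fixpoint phase1 (j : nat) : seq T * seq T :=
  if j is j'.+1 then dla_pass (theta j') (phase1 j') else ([::], [::]).

(* the while loop performs exactly N passes *)
Definition phase1_stops_at (N : nat) : Prop :=
  (forall j, (j < N)%N -> theta_thr <= theta j) /\ theta N < theta_thr.

Definition prefix_sel (s : seq T) (l : nat) : {set T} :=
  sset (take (\max_(i < (size s).+1 |
                 cost (sset (take i s)) <= eps' * B * (1 + eps') ^+ l) i) s).

Definition phase2_set (s : seq T) (l : nat) : {set T} :=
  let X' := prefix_sel s l in
  argmax_set f X' [seq e |: X' | e <- enum T & cost (e |: X') <= B].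

(* output of DLA when Phase 1 performs N passes *)
Definition DLA (N : nat) : {set T} :=
  let X := (phase1 N).1 in let Y := (phase1 N).2 in
  argmax_set f (finset.set0 : {set T})
    ([:: LA; sset X; sset Y]
       ++ [seq phase2_set X l | l <- iota 0 Delta.+1]
       ++ [seq phase2_set Y l | l <- iota 0 Delta.+1]).

End Algo.

(* Let A := O :\ r. As c r >= (1 - eps') B, the set A costs at most eps' B, so each
   of its elements still fits next to any set of cost at most (1 - eps') B.

   Each chain built by LA is a 3-approximation of its best feasible tail, and by
   submodularity the two disjoint chains together cover f A up to a factor 3, so
   f A <= 18 Gamma and opt <= 19 Gamma. Hence the first threshold of Phase 1 is at
   least L := (1 - eps') opt / (6 B) while the last one is below L; let theta_J be the
   last threshold >= L, so that theta_J < opt / (6 B).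

   Let U be X (or Y) after pass J and V the other set. If c U > (1 - eps') B, every
   element of U was added at density >= theta_J >= L, so f S >= f U >= (1 - eps')^2
   opt / 6. Otherwise every element of A fitted next to U during pass J: those in
   neither set gain less than theta_J per unit cost, those in V gain no more for U
   than they did for V, and r gains at most f {r} <= Gamma. Summing the gains,
   f (O :|: U) <= f U + f V + Gamma + theta_J c A <= 3 f S + eps' opt / 6. *)

From mathcomp Require Import all_boot all_order all_algebra.
From mathcomp Require Import all_classical all_reals exp.
From mathcomp Require Import ring lra zify.
(* Give the [{set T}] lemmas of fintype and finset precedence over those of classical_sets. *)
From mathcomp Require Import fintype finset.
Import Order.TTheory GRing.Theory Num.Theory.
Local Open Scope ring_scope.
Set Implicit Arguments. Unset Strict Implicit. Unset Printing Implicit Defensive.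

Section Submodular.
Variables (R : realFieldType) (T : finType) (f : {set T} -> R).
Hypothesis f_submod :
  forall A1 A2 : {set T}, f (A1 :|: A2) + f (A1 :&: A2) <= f A1 + f A2.

Lemma submod_gain_le (A1 A2 : {set T}) e : A1 \subset A2 -> e \notin A2 ->
  f (e |: A2) - f A2 <= f (e |: A1) - f A1.
Proof.
move=> sA12 eA2; have := f_submod (e |: A1) A2.
have -> : (e |: A1) :|: A2 = e |: A2 by rewrite -setUA (setUidPr sA12).
have -> : (e |: A1) :&: A2 = A1.
  apply/setP=> x; rewrite !inE; case: (x =P e) => [->|_] /=.
    by rewrite (negbTE eA2); apply/esym/negbTE; apply: contra eA2 => /(subsetP sA12).
  by apply/idP/idP => [/andP[]//|xA1]; rewrite xA1 (subsetP sA12).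
lra.
Qed.

Lemma submod_setU_le (A1 A2 : {set T}) : (forall A, 0 <= f A) ->
  f (A1 :|: A2) <= f A1 + f A2.
Proof. by move=> f_ge0; have := f_submod A1 A2; have := f_ge0 (A1 :&: A2); lra. Qed.

Lemma submod_setU_seq_le (Z : {set T}) (s : seq T) :
  uniq s -> {in s, forall x, x \notin Z} ->
  f (Z :|: [set x in s]) <= f Z + \sum_(a <- s) (f (a |: Z) - f Z).
Proof.
elim: s => [|a s IH] /=.
  by move=> _ _; rewrite big_nil addr0 (_ : [set x in [::]] = set0) ?setU0 //;
    apply/setP=> x; rewrite !inE.
move=> /andP[a_s s_uniq] sZ.
have aZ : a \notin Z by apply: sZ; rewrite mem_head.
have IHs := IH s_uniq (fun x xs => sZ x (mem_behead (xs : x \in behead (a :: s)))).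
have a_Zs : a \notin Z :|: [set x in s] by rewrite !inE negb_or aZ.
have := submod_gain_le (subsetUl Z [set x in s]) a_Zs.
rewrite big_cons (_ : [set x in a :: s] = a |: [set x in s]); last first.
  by apply/setP=> x; rewrite !inE.
rewrite setUCA; lra.
Qed.

Lemma submod_setU_le_gains (Z A : {set T}) :
  f (Z :|: A) <= f Z + \sum_(a in A :\: Z) (f (a |: Z) - f Z).
Proof.
have -> : Z :|: A = Z :|: [set x in enum (A :\: Z)].
  apply/setP=> x; rewrite !inE mem_enum !inE.
  by case: (x \in Z); rewrite //= andbT.
rewrite -big_enum /=; apply: submod_setU_seq_le; first exact: enum_uniq.
by move=> x; rewrite mem_enum !inE => /andP[].
Qed.

End Submodular.

Lemma ler_sum_subpred (R : numDomainType) (I : Type) (r : seq I) (P Q : pred I)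
    (F : I -> R) :
  (forall i, P i -> Q i) -> (forall i, Q i -> 0 <= F i) ->
  \sum_(i <- r | P i) F i <= \sum_(i <- r | Q i) F i.
Proof.
move=> PQ F_ge0; rewrite big_mkcond [X in _ <= X]big_mkcond; apply: ler_sum => i _.
by case Pi: (P i); [rewrite PQ | case Qi: (Q i) => //; apply: F_ge0].
Qed.

Section SeqSets.
Variable T : finType.

Lemma sset_nil : sset [::] = set0 :> {set T}.
Proof. by apply/setP=> x; rewrite !inE. Qed.

Lemma sset_cons (x : T) s : sset (x :: s) = x |: sset s.
Proof. by apply/setP=> y; rewrite !inE. Qed.

Lemma sset_rcons s (x : T) : sset (rcons s x) = x |: sset s.
Proof. by apply/setP=> y; rewrite !inE mem_rcons inE. Qed.

Lemma sset_cat (s t : seq T) : sset (s ++ t) = sset s :|: sset t.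
Proof. by apply/setP=> y; rewrite !inE mem_cat. Qed.

Lemma in_sset (x : T) s : (x \in sset s) = (x \in s).
Proof. by rewrite inE. Qed.

Lemma sset_sub (s t : seq T) : {subset s <= t} -> sset s \subset sset t.
Proof. by move=> st; apply/subsetP=> x; rewrite !in_sset => /st. Qed.

End SeqSets.

Section Cost.
Variables (R : realType) (T : finType) (c : T -> R).
Hypothesis c_gt0 : forall e, 0 < c e.

Lemma cost0 : cost c set0 = 0.
Proof. by rewrite /cost big_set0. Qed.

Lemma cost1 x : cost c [set x] = c x.
Proof. by rewrite /cost big_set1. Qed.

Lemma costU1 x (A : {set T}) : x \notin A -> cost c (x |: A) = c x + cost c A.
Proof. by move=> xA; rewrite /cost big_setU1. Qed.

Lemma cost_ge0 (A : {set T}) : 0 <= cost c A.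
Proof. by apply: sumr_ge0 => i _; apply: ltW. Qed.

Lemma cost_sub (A1 A2 : {set T}) : A1 \subset A2 -> cost c A1 <= cost c A2.
Proof.
move=> sA12; apply: ler_sum_subpred => [i|i _]; last exact: ltW.
exact: (subsetP sA12).
Qed.

End Cost.

Section ArgMax.
Variables (R : realType) (T : finType) (g : {set T} -> R).

Lemma bestf_ge d s : g d <= g (bestf g d s) /\ {in s, forall A, g A <= g (bestf g d s)}.
Proof.
elim: s d => [|a s IH] d /=; first by split.
have [h1 h2] := IH (if g d < g a then a else d).
split; first by apply: le_trans h1; case: ifP => // /ltW.
move=> A; rewrite in_cons => /orP[/eqP->|/h2//].
by apply: le_trans h1; case: ifP => //; rewrite ltNge => /negbFE.
Qed.

Lemma bestf_in d s : bestf g d s \in d :: s.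
Proof.
elim: s d => [|a s IH] d /=; first by rewrite mem_head.
by have := IH (if g d < g a then a else d); case: ifP => _;
  rewrite !in_cons => /orP[] ->; rewrite ?orbT.
Qed.

Lemma argmax_set_ge d s A : A \in s -> g A <= g (argmax_set g d s).
Proof.
case: s => [//|a s]; rewrite /argmax_set /= in_cons => /orP[/eqP->|As].
  by have [] := bestf_ge a s.
by have [_ ] := bestf_ge a s; apply.
Qed.

Lemma argmax_set_in d s : s != [::] -> argmax_set g d s \in s.
Proof. by case: s => [//|a s] _; apply: bestf_in. Qed.

End ArgMax.

Section Placement.
Variables (R : realType) (T : finType) (f : {set T} -> R) (c : T -> R) (B : R)
  (tie : seq T -> seq T -> T -> bool).

Definition put_outcome (X Y X' Y' : seq T) e (okX okY : bool) :=
  [\/ [/\ X' = rcons X e, Y' = Y, okX & (okY -> dens f c Y e <= dens f c X e)],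
      [/\ X' = X, Y' = rcons Y e, okY & (okX -> dens f c X e <= dens f c Y e)] |
      [/\ X' = X, Y' = Y, ~~ okX & ~~ okY]].

Lemma choose_putP X Y e okX okY : put_outcome X Y
  (choose_put f c tie X Y e okX okY).1 (choose_put f c tie X Y e okX okY).2 e okX okY.
Proof.
rewrite /choose_put; case: okX; case: okY => /=; last 3 first.
- exact: Or31.
- exact: Or32.
- exact: Or33.
case: ifP => [/orP[/ltW h|/andP[/eqP h _]]|/negbT]; first exact: Or31.
  by apply: Or31; split=> //; rewrite h.
by rewrite negb_or => /andP[]; rewrite -leNgt => h _; apply: Or32.
Qed.

Lemma put_outcome_swap X Y X' Y' e okX okY :
  put_outcome X Y X' Y' e okX okY -> put_outcome Y X Y' X' e okY okX.
Proof. by case=> -[]; [move=> *; apply: Or32|move=> *; apply: Or31|move=> *; apply: Or33]. Qed.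

(* Facts about one of the two sets are proved once, for [(orient b st).1], and
   used with [b = true] for X and [b = false] for Y. *)
Definition orient (b : bool) (st : seq T * seq T) := if b then st else (st.2, st.1).

Lemma orientN b st : (orient (~~ b) st).1 = (orient b st).2.
Proof. by case: b. Qed.

Definition la_step_spec (U V U' V' : seq T) e :=
  (B / 2 < c e /\ U' = U /\ V' = V) \/
  (c e <= B / 2 /\ put_outcome U V U' V' e (f (sset U) / B <= dens f c U e)
                                          (f (sset V) / B <= dens f c V e)).

Lemma la_stepP b st e : let s := orient b st in let s' := orient b (la_step f c B tie st e) in
  la_step_spec s.1 s.2 s'.1 s'.2 e.
Proof.
case: st => X Y; rewrite /la_step /la_step_spec.
case: ifP => [ce|/negbT]; last by rewrite -ltNge => ce; left; case: b.
right; split=> //; case: b; first exact: choose_putP.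
exact/put_outcome_swap/choose_putP.
Qed.

Definition dla_ok th (U : seq T) e := (cost c (e |: sset U) <= B) && (th <= dens f c U e).

Definition dla_step_spec th (U V U' V' : seq T) e :=
  ((e \in U) || (e \in V)) /\ U' = U /\ V' = V \/
  [/\ e \notin U, e \notin V & put_outcome U V U' V' e (dla_ok th U e) (dla_ok th V e)].

Lemma dla_stepP th b st e : let s := orient b st in
  let s' := orient b (dla_step f c B tie th st e) in dla_step_spec th s.1 s.2 s'.1 s'.2 e.
Proof.
case: st => X Y; rewrite /dla_step /dla_step_spec.
case: ifP => [eXY|/negbT]; first by left; case: b => //=; rewrite orbC.
rewrite negb_or => /andP[eX eY]; right.
case: b; split=> //; first exact: choose_putP.
exact/put_outcome_swap/choose_putP.
Qed.

End Placement.

Lemma foldl_rcons_ind (T S : Type) (g : S -> T -> S) (P : seq T -> S -> Prop) s p st :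
  P p st -> (forall p st e, P p st -> P (rcons p e) (g st e)) ->
  P (p ++ s) (foldl g st s).
Proof.
elim: s p st => [|a s IH] p st /=; first by rewrite cats0.
by move=> Pp H; rewrite -cat_rcons; apply: IH => //; apply: H.
Qed.

Lemma foldl_rcons_ind_uniq (T : eqType) (S : Type) (g : S -> T -> S)
    (P : seq T -> S -> Prop) s p st :
  uniq (p ++ s) -> P p st ->
  (forall p st e, e \notin p -> P p st -> P (rcons p e) (g st e)) ->
  P (p ++ s) (foldl g st s).
Proof.
elim: s p st => [|a s IH] p st /=; first by rewrite cats0.
move=> ps_uniq Pp H; rewrite -cat_rcons; apply: IH => //; first by rewrite cat_rcons.
by apply: H => //; move: ps_uniq; rewrite cat_uniq /= => /and3P[_ /norP[]].
Qed.

Section Gains.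
Variables (R : realType) (T : finType) (f : {set T} -> R) (c : T -> R).
Hypothesis c_gt0 : forall e, 0 < c e.

Lemma densE (U : seq T) e : dens f c U e * c e = f (e |: sset U) - f (sset U).
Proof. by rewrite /dens divfK // gt_eqF. Qed.

Lemma gain_ge (U : seq T) e k :
  k <= dens f c U e -> k * c e <= f (e |: sset U) - f (sset U).
Proof. by move=> h; rewrite -densE ler_wpM2r // ltW. Qed.

Lemma gain_lt (U : seq T) e k :
  ~~ (k <= dens f c U e) -> f (e |: sset U) - f (sset U) < k * c e.
Proof. by rewrite -ltNge => h; rewrite -densE ltr_pM2r. Qed.

Lemma gain_le (U V : seq T) e : dens f c U e <= dens f c V e ->
  f (e |: sset U) - f (sset U) <= f (e |: sset V) - f (sset V).
Proof. by move=> h; rewrite -!densE ler_wpM2r // ltW. Qed.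

End Gains.

Section LAGreedy.
Variables (R : realType) (T : finType) (f : {set T} -> R) (c : T -> R) (B : R).
Hypotheses (f_ge0 : forall A, 0 <= f A) (f0 : f set0 = 0)
  (f_submod : forall A1 A2 : {set T}, f (A1 :|: A2) + f (A1 :&: A2) <= f A1 + f A2)
  (c_gt0 : forall e, 0 < c e) (B_gt0 : 0 < B).

Inductive la_chain : seq T -> Prop :=
| la_chain_nil : la_chain [::]
| la_chain_rcons s e : la_chain s -> e \notin s -> c e <= B / 2 ->
    f (sset s) / B * c e <= f (e |: sset s) - f (sset s) -> la_chain (rcons s e).

Lemma fB_ge0 (U : seq T) : 0 <= f (sset U) / B.
Proof. by rewrite divr_ge0 // ltW. Qed.

Variable A : {set T}.
Hypothesis A_cheap : forall o, o \in A -> c o <= B / 2.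

(* Every element of A processed so far and not in U was either rejected by U,
   making its summand negative, or went to V while at least as dense for V. *)
Definition la_inv (p U V : seq T) :=
  \sum_(o <- p | (o \in A) && (o \notin U))
     (f (o |: sset U) - f (sset U) - f (sset U) / B * c o) <= f (sset V).

Lemma la_inv_rcons (p U V V' : seq T) e : e \notin U -> f (sset V) <= f (sset V') ->
  (e \in A -> f (e |: sset U) - f (sset U) - f (sset U) / B * c e <=
              f (sset V') - f (sset V)) ->
  la_inv p U V -> la_inv (rcons p e) U V'.
Proof.
move=> eU mV he inv; rewrite /la_inv -cats1 big_cat big_cons big_nil /= eU andbT.
by case: ifP => [/he|_]; rewrite /la_inv in inv; lra.
Qed.

Lemma la_inv_rcons_self (p U V : seq T) e : e \notin p -> {subset U <= p} ->
  f (sset U) / B * c e <= f (e |: sset U) - f (sset U) ->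
  la_inv p U V -> la_inv (rcons p e) (rcons U e) V.
Proof.
move=> ep sU gain_e inv.
rewrite /la_inv -cats1 big_cat big_cons big_nil /= mem_rcons in_cons eqxx andbF addr0.
apply: le_trans inv; rewrite big_seq_cond [X in _ <= X]big_seq_cond.
rewrite (eq_bigl (fun o => (o \in p) && ((o \in A) && (o \notin U)))) => [|o].
  apply: ler_sum => o /andP[op /andP[oA oU]]; rewrite sset_rcons.
  have oe : o != e by apply/eqP => oe; move: ep; rewrite -oe op.
  have oeU : o \notin e |: sset U by rewrite !inE negb_or oe.
  have := submod_gain_le f_submod (subsetUr [set e] (sset U)) oeU.
  have : f (sset U) / B * c o <= f (e |: sset U) / B * c o.
    apply: ler_wpM2r; first exact: ltW.
    apply: ler_wpM2r; first by rewrite invr_ge0 ltW.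
    by have := mulr_ge0 (fB_ge0 U) (ltW (c_gt0 e)); lra.
  lra.
rewrite mem_rcons in_cons negb_or.
by case op: (o \in p); rewrite //= andbCA; case: (o =P e) => // oe; move: ep; rewrite -oe op.
Qed.

Lemma la_step_inv (p U V U' V' : seq T) e :
  la_step_spec f c B U V U' V' e -> e \notin p -> {subset U <= p} -> {subset V <= p} ->
  la_chain U -> la_inv p U V ->
  [/\ {subset U' <= rcons p e}, la_chain U' & la_inv (rcons p e) U' V'].
Proof.
move=> hstep ep sU sV chU inv.
have sU_rcons : {subset U <= rcons p e}.
  by move=> x /sU xp; rewrite mem_rcons in_cons xp orbT.
have eU : e \notin U by apply: contra ep; apply: sU.
have dens_ge0 (W : seq T) : 0 <= f (sset W) / B * c e.
  by rewrite mulr_ge0 ?fB_ge0 ?ltW.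
case: hstep => [[ce [-> ->]]|[ce [[-> -> okU _]|[-> -> okV okU]|[-> -> nU _]]]].
- split=> //; apply: la_inv_rcons => // eA.
  by have := A_cheap eA; lra.
- split; last exact: la_inv_rcons_self (gain_ge c_gt0 okU) inv.
    by move=> x; rewrite !mem_rcons !in_cons => /orP[->|/sU ->]; rewrite ?orbT.
  by apply: la_chain_rcons => //; apply: gain_ge.
- have gV := gain_ge c_gt0 okV.
  split=> //; apply: la_inv_rcons inv; rewrite ?sset_rcons //.
    by have := dens_ge0 V; lra.
  move=> _; case okU' : (f (sset U) / B <= dens f c U e).
    by have := gain_le c_gt0 (okU okU'); have := dens_ge0 U; lra.
  by have := gain_lt c_gt0 (negbT okU'); have := dens_ge0 V; lra.
- split=> //; apply: la_inv_rcons => // _.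
  by have := gain_lt c_gt0 nU; lra.
Qed.

Lemma la_step_disjoint (p U V U' V' : seq T) e :
  la_step_spec f c B U V U' V' e -> e \notin p -> {subset U <= p} -> {subset V <= p} ->
  {in U, forall x, x \notin V} -> {in U', forall x, x \notin V'}.
Proof.
move=> hstep ep sU sV dUV.
have eU : e \notin U by apply: contra ep; apply: sU.
have eV : e \notin V by apply: contra ep; apply: sV.
case: hstep => [[_ [-> ->]]//|[_ [[-> -> _ _]|[-> -> _ _]|[-> -> _ _]]]] // x.
  by rewrite mem_rcons in_cons => /orP[/eqP->|/dUV].
move=> xU; rewrite mem_rcons in_cons negb_or dUV // andbT.
by apply: contraNneq eU => <-.
Qed.

Definition la_loop_inv (p : seq T) (st : seq T * seq T) :=
  [/\ {subset st.1 <= p}, {subset st.2 <= p}, {in st.1, forall x, x \notin st.2} &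
      [/\ la_chain st.1, la_chain st.2, la_inv p st.1 st.2 & la_inv p st.2 st.1]].

Lemma la_loopP (tie : seq T -> seq T -> T -> bool) ord :
  uniq ord -> la_loop_inv ord (la_loop f c B ord tie).
Proof.
move=> ord_uniq; rewrite /la_loop -[ord]cat0s; apply: foldl_rcons_ind_uniq => //.
  by split=> //; split; try exact: la_chain_nil; rewrite /la_inv big_nil sset_nil f0.
move=> p st e ep [s1 s2 d [c1 c2 i1 i2]].
have hX := la_stepP f c B tie true st e.
have hY := la_stepP f c B tie false st e.
have [t1 t2 t3] := la_step_inv hX ep s1 s2 c1 i1.
have [u1 u2 u3] := la_step_inv hY ep s2 s1 c2 i2.
by split=> //; apply: (la_step_disjoint hX ep s1 s2 d).
Qed.

End LAGreedy.

Section LABounds.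
Variables (R : realType) (T : finType) (f : {set T} -> R) (c : T -> R) (B : R).
Hypotheses (f_ge0 : forall A, 0 <= f A)
  (f_submod : forall A1 A2 : {set T}, f (A1 :|: A2) + f (A1 :&: A2) <= f A1 + f A2)
  (c_gt0 : forall e, 0 < c e) (B_gt0 : 0 < B).

Local Notation la_chain := (la_chain f c B).

Lemma la_chain_rconsE s e : la_chain (rcons s e) ->
  [/\ la_chain s, e \notin s, c e <= B / 2 &
      f (sset s) / B * c e <= f (e |: sset s) - f (sset s)].
Proof.
move=> h; inversion h as [E|s' e' ? ? ? ? E]; first by case: s h E.
by case: (rcons_inj E) => <- <-.
Qed.

Lemma la_chain_uniq s : la_chain s -> uniq s.
Proof.
elim/last_ind: s => [//|s e IH] /la_chain_rconsE[chs es _ _].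
by rewrite rcons_uniq es IH.
Qed.

Lemma la_chain_cheap s : la_chain s -> {in s, forall x, c x <= B / 2}.
Proof.
elim/last_ind: s => [//|s e IH] /la_chain_rconsE[chs _ ce _] x.
by rewrite mem_rcons in_cons => /orP[/eqP->//|]; apply: IH.
Qed.

Lemma la_chain_gain P Q : la_chain (P ++ Q) ->
  f (sset P) / B * cost c (sset Q) <= f (sset (P ++ Q)) - f (sset P).
Proof.
elim/last_ind: Q => [|Q e IH]; first by rewrite cats0 sset_nil cost0 mulr0 subrr.
rewrite -rcons_cat => /la_chain_rconsE[ch eQ _ gain_e].
have {}eQ : e \notin sset Q by rewrite in_sset; apply: contra eQ; rewrite mem_cat orbC => ->.
rewrite !sset_rcons costU1 // mulrDr.
have := IH ch; have : f (sset P) / B * c e <= f (sset (P ++ Q)) / B * c e.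
  apply: ler_wpM2r; first exact: ltW.
  apply: ler_wpM2r; first by rewrite invr_ge0 ltW.
  by have := IH ch; have := mulr_ge0 (fB_ge0 f_ge0 B_gt0 P) (cost_ge0 c_gt0 (sset Q)); lra.
lra.
Qed.

(* A chain whose suffix Q costs at least B/2 grew by at least f(P)/2 along Q,
   so Q carries a third of its value. *)
Lemma la_chain_suffix_bound P Q : la_chain (P ++ Q) -> B / 2 <= cost c (sset Q) ->
  f (sset (P ++ Q)) <= 3 * f (sset Q).
Proof.
move=> ch heavy; have := la_chain_gain ch.
have := submod_setU_le f_submod (sset P) (sset Q) f_ge0; rewrite -sset_cat.
have : f (sset P) / 2 <= f (sset P) / B * cost c (sset Q).
  rewrite (_ : f (sset P) / 2 = f (sset P) / B * (B / 2)); last by field; rewrite gt_eqF.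
  by apply: ler_wpM2l => //; apply: fB_ge0.
have := f_ge0 (sset P); lra.
Qed.

Lemma la_tail_in s : la_tail c B s \in
  [seq sset (drop (size s - j) s) | j <- iota 0 (size s).+1
        & cost c (sset (drop (size s - j) s)) <= B].
Proof. by apply: argmax_set_in; rewrite /= subn0 drop_size sset_nil cost0 ltW. Qed.

Lemma la_tail_cost s : cost c (la_tail c B s) <= B.
Proof. by case/mapP: (la_tail_in s) => j; rewrite mem_filter => /andP[h _] ->. Qed.

(* Either the whole chain is taken, or the element just before the tail did not fit. *)
Lemma la_tail_spec s : la_chain s -> exists k,
  la_tail c B s = sset (drop k s) /\ (k = 0%N \/ B / 2 < cost c (sset (drop k s))).
Proof.
move=> ch; set n := size s.
case/mapP: (la_tail_in s) => j; rewrite mem_filter mem_iota /= => /andP[_ jn] tailE.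
exists (n - j)%N; split=> //.
case k0 : (n - j)%N => [|k]; [by left | right].
case ek : (drop k s) => [|x t].
  by move: (size_drop k s); rewrite ek -/n /=; lia.
have tE : drop k.+1 s = t by rewrite -addn1 addnC -drop_drop ek /= drop0.
have xt : x \notin sset t.
  by rewrite in_sset; have := drop_uniq k (la_chain_uniq ch); rewrite ek => /andP[].
have cx : c x <= B / 2.
  by apply: (la_chain_cheap ch); apply: (mem_drop (n0 := k)); rewrite ek mem_head.
have tail_max : cost c (sset (x :: t)) <= B ->
    cost c (sset (x :: t)) <= cost c (la_tail c B s).
  move=> h; apply: argmax_set_ge; apply/mapP; exists j.+1.
    by rewrite mem_filter mem_iota (_ : n - j.+1 = k)%N ?ek ?h /=; lia.
  by rewrite (_ : n - j.+1 = k)%N ?ek //; lia.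
move: tail_max; rewrite tailE k0 tE sset_cons costU1 // => tail_max.
by have := c_gt0 x; case: (leP (c x + cost c (sset t)) B) => [/tail_max|]; lra.
Qed.

Lemma la_tail_bound s : la_chain s -> f (sset s) <= 3 * f (la_tail c B s).
Proof.
move=> ch; have [k [-> [->|heavy]]] := la_tail_spec ch.
  by rewrite drop0; have := f_ge0 (sset s); lra.
rewrite -{1}(cat_take_drop k s).
by apply: la_chain_suffix_bound; rewrite ?cat_take_drop // ltW.
Qed.

End LABounds.

Lemma big_perm_enum (R : nmodType) (T : finType) (ord : seq T) (P : pred T) (F : T -> R) :
  perm_eq ord (enum T) -> \sum_(o <- ord | P o) F o = \sum_(o | P o) F o.
Proof. by move=> ordE; rewrite (perm_big _ ordE) big_enum_cond; apply: eq_bigl => i. Qed.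

Section LAValue.
Variables (R : realType) (T : finType) (f : {set T} -> R) (c : T -> R) (B : R)
  (tie : seq T -> seq T -> T -> bool) (ord : seq T).
Hypotheses (f_ge0 : forall A, 0 <= f A) (f0 : f set0 = 0)
  (f_submod : forall A1 A2 : {set T}, f (A1 :|: A2) + f (A1 :&: A2) <= f A1 + f A2)
  (c_gt0 : forall e, 0 < c e) (B_gt0 : 0 < B) (c_leB : forall e, c e <= B)
  (ordE : perm_eq ord (enum T)).

Local Notation X := (la_loop f c B ord tie).1.
Local Notation Y := (la_loop f c B ord tie).2.
Local Notation Gamma := (Gamma f c B ord tie).

Lemma ord_uniq : uniq ord.
Proof. by rewrite (perm_uniq ordE) enum_uniq. Qed.

(* Split each gain over U into its excess over the density f(U)/B and the rest:
   the excesses sum to at most f(V), the rest to at most f(U) since c(A) <= B. *)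
Lemma la_inv_bound (A : {set T}) (U V : seq T) : cost c A <= B ->
  la_inv f c B A ord U V -> f (sset U :|: A) <= 2 * f (sset U) + f (sset V).
Proof.
move=> cA; rewrite /la_inv (big_perm_enum _ _ ordE).
set k := f (sset U) / B.
rewrite (eq_bigl (fun o => o \in A :\: sset U)) => [inv|o]; last by rewrite !inE andbC.
have := submod_setU_le_gains f_submod (sset U) A.
have -> : \sum_(a in A :\: sset U) (f (a |: sset U) - f (sset U)) =
    \sum_(a in A :\: sset U) (f (a |: sset U) - f (sset U) - k * c a) +
    \sum_(a in A :\: sset U) (k * c a).
  by rewrite -big_split; apply: eq_bigr => a _ /=; lra.
have k_ge0 : 0 <= k by apply: fB_ge0.
have : \sum_(a in A :\: sset U) (k * c a) <= \sum_(a in A) (k * c a).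
  apply: ler_sum_subpred => [a|a _]; first by rewrite inE => /andP[].
  exact: mulr_ge0 k_ge0 (ltW (c_gt0 a)).
have : \sum_(a in A) (k * c a) <= f (sset U).
  rewrite -mulr_sumr -/(cost c A) -[X in _ <= X](divfK (lt0r_neq0 B_gt0)) -/k.
  exact: ler_wpM2l.
lra.
Qed.

Lemma la_loop_bound (A : {set T}) : {in A, forall o, c o <= B / 2} -> cost c A <= B ->
  f A <= 3 * (f (sset X) + f (sset Y)).
Proof.
move=> A_cheap cA.
have [_ _ dXY [_ _ invX invY]] := la_loopP f_ge0 f0 f_submod c_gt0 B_gt0 A_cheap tie ord_uniq.
have := la_inv_bound cA invX; have := la_inv_bound cA invY.
have := f_submod (sset X :|: A) (sset Y :|: A).
have -> : (sset X :|: A) :&: (sset Y :|: A) = A.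
  apply/setP=> x; rewrite !inE; case xA: (x \in A); rewrite ?orbT ?orbF //=.
  by case xX: (x \in X) => //=; apply/negbTE; apply: dXY.
have := f_ge0 ((sset X :|: A) :|: (sset Y :|: A)); lra.
Qed.

Lemma Gamma_ge_tail b : f (la_tail c B (if b then X else Y)) <= Gamma.
Proof.
by apply: argmax_set_ge; rewrite mem_cat !in_cons; case: b; rewrite eqxx ?orbT.
Qed.

Lemma Gamma_ge1 e : f [set e] <= Gamma.
Proof. by apply: argmax_set_ge; rewrite mem_cat map_f ?orbT ?mem_enum. Qed.

Lemma LA_cost : cost c (LA f c B ord tie) <= B.
Proof.
rewrite /LA.
have := @argmax_set_in R T f set0
  ([:: la_tail c B X; la_tail c B Y] ++ [seq [set e] | e <- enum T]) isT.
rewrite mem_cat !in_cons => /orP[/orP[/eqP->|/orP[/eqP->|//]]|].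
- exact: la_tail_cost.
- exact: la_tail_cost.
by case/mapP => e _ ->; rewrite cost1.
Qed.

Lemma opt_le_19Gamma (O : {set T}) r : cost c O <= B -> r \in O ->
  {in O :\ r, forall o, c o <= B / 2} -> f O <= 19 * Gamma.
Proof.
move=> cO rO O_cheap.
have cA : cost c (O :\ r) <= B by apply: le_trans cO; apply/cost_sub/subD1set.
have [_ _ _ [chX chY _ _]] := la_loopP f_ge0 f0 f_submod c_gt0 B_gt0 O_cheap tie ord_uniq.
have := la_tail_bound f_ge0 f_submod c_gt0 B_gt0 chX.
have := la_tail_bound f_ge0 f_submod c_gt0 B_gt0 chY.
have := Gamma_ge_tail true; have := Gamma_ge_tail false.
have := la_loop_bound O_cheap cA; have := Gamma_ge1 r.
have := submod_setU_le f_submod [set r] (O :\ r) f_ge0.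
by rewrite setD1K //=; lra.
Qed.

End LAValue.

Section DLAStep.
Variables (R : realType) (T : finType) (f : {set T} -> R) (c : T -> R) (B th : R).
Hypotheses
  (f_submod : forall A1 A2 : {set T}, f (A1 :|: A2) + f (A1 :&: A2) <= f A1 + f A2)
  (c_gt0 : forall e, 0 < c e) (th_gt0 : 0 < th).

Lemma dla_step_mono (U V U' V' : seq T) e : dla_step_spec f c B th U V U' V' e ->
  [/\ f (sset U) <= f (sset U'), {subset U <= U'} & {subset V <= V'}].
Proof.
rewrite /dla_step_spec; case=> [[_ [-> ->]]|[eU eV sp]]; first by split.
case: sp => [[-> -> okU _]|[-> -> _ _]|[-> -> _ _]].
- split; last by [].
  + move/andP: okU => [_ okU]; have := gain_ge c_gt0 okU.
    have := mulr_gt0 th_gt0 (c_gt0 e); rewrite sset_rcons; lra.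
  + by move=> x xU; rewrite mem_rcons in_cons xU orbT.
- by split=> // x xU; rewrite mem_rcons in_cons xU orbT.
- by split.
Qed.

Lemma dla_step_disjoint (U V U' V' : seq T) e : dla_step_spec f c B th U V U' V' e ->
  {in U, forall x, x \notin V} -> {in U', forall x, x \notin V'}.
Proof.
move=> [[_ [-> ->]]|[eU eV sp]] d; first exact: d.
case: sp => [[-> -> _ _]|[-> -> _ _]|[-> -> _ _]] // x.
  rewrite mem_rcons in_cons => /orP[/eqP->//|]; exact: d.
move=> xU; rewrite mem_rcons in_cons negb_or d // andbT.
by apply/eqP=> xe; move: eU; rewrite -xe xU.
Qed.

Lemma dla_step_density m (U V U' V' : seq T) e : m <= th -> 0 <= m ->
  dla_step_spec f c B th U V U' V' e ->
  m * cost c (sset U) <= f (sset U) -> m * cost c (sset U') <= f (sset U').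
Proof.
move=> mth m0 [[_ [-> _]]|[eU eV sp]]; first by [].
case: sp => [[-> _ okU _]|[-> _ _ _]|[-> _ _ _]] // h.
move/andP: okU => [_ okU]; have := gain_ge c_gt0 okU.
rewrite sset_rcons costU1 ?in_sset //.
have := c_gt0 e; nra.
Qed.

Variable A : {set T}.
Variable K : R.
Hypothesis A_fits : forall o, o \in A -> c o + K <= B.

(* Each element of A in V had, when it was placed, a gain for U at most its
   gain for V; by submodularity this persists as U and V grow. *)
Definition dla_inv (U V : seq T) :=
  \sum_(o in A :&: sset V) (f (o |: sset U) - f (sset U)) <= f (sset V).

Lemma cost_fits (U : seq T) e : e \notin U -> e \in A -> cost c (sset U) <= K ->
  cost c (e |: sset U) <= B.
Proof.
move=> eU eA cK; rewrite costU1 ?in_sset //; have := A_fits eA; lra.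
Qed.

Lemma dla_step_inv (U V U' V' : seq T) e : dla_step_spec f c B th U V U' V' e ->
  {in U, forall x, x \notin V} ->
  (cost c (sset U) <= K -> dla_inv U V) -> cost c (sset U') <= K -> dla_inv U' V'.
Proof.
move=> hR d Q cK'.
have [_ sUU' _] := dla_step_mono hR.
have cK : cost c (sset U) <= K.
  exact: le_trans (cost_sub c_gt0 (sset_sub sUU')) cK'.
have inv := Q cK; rewrite /dla_inv in inv.
case: hR => [[_ [-> ->]]|[eU eV sp]]; first by rewrite /dla_inv.
case: sp => [[-> -> okU _]|[-> -> okV okU]|[-> -> _ _]]; last by rewrite /dla_inv.
- rewrite /dla_inv; apply: le_trans inv; apply: ler_sum => o.
  rewrite !inE => /andP[oA oV].
  have oU : o \notin U by apply: contraL oV; apply: d.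
  have oe : o != e by apply/eqP=> oe; move: eV; rewrite -oe oV.
  rewrite sset_rcons.
  apply: (submod_gain_le f_submod (subsetUr _ _)).
  by rewrite !inE negb_or oe oU.
- rewrite /dla_inv sset_rcons.
  move/andP: okV => [_ okV]; have gV := gain_ge c_gt0 okV.
  have ce := c_gt0 e.
  case eA : (e \in A).
    have -> : A :&: (e |: sset V) = e |: (A :&: sset V).
      apply/setP=> x; rewrite !inE; case: (x =P e) => [->|]; by rewrite ?eA.
    rewrite big_setU1 /=; last by rewrite !inE negb_and eV orbT.
    case okU' : (dla_ok f c B th U e).
      have := gain_le c_gt0 (okU okU'); nra.
    move: okU'; rewrite /dla_ok (cost_fits eU eA cK) /= => /negbT nU.
    have := gain_lt c_gt0 nU; nra.
  have -> : A :&: (e |: sset V) = A :&: sset V.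
    apply/setP=> x; rewrite !inE; case: (x =P e) => [->|]; by rewrite ?eA.
  have := mulr_gt0 th_gt0 ce; lra.
Qed.

Definition dla_rejected (p U V : seq T) := forall o, o \in A -> o \in p ->
  [\/ o \in U, o \in V | f (o |: sset U) - f (sset U) < th * c o].

Lemma dla_step_rejected p (U V U' V' : seq T) e : dla_step_spec f c B th U V U' V' e ->
  (cost c (sset U) <= K -> dla_rejected p U V) ->
  cost c (sset U') <= K -> dla_rejected (rcons p e) U' V'.
Proof.
move=> hR Q cK'.
have [_ sUU' sVV'] := dla_step_mono hR.
have cK : cost c (sset U) <= K.
  exact: le_trans (cost_sub c_gt0 (sset_sub sUU')) cK'.
have old := Q cK.
move=> o oA; rewrite mem_rcons in_cons.
case oU' : (o \in U'); first by move=> _; apply: Or31.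
case oV' : (o \in V'); first by move=> _; apply: Or32.
case/orP=> [/eqP oe|op]; last first.
  case: (old o oA op) => [/sUU'|/sVV'|h]; rewrite ?oU' ?oV' //.
  apply: Or33; apply: le_lt_trans h; apply: (submod_gain_le f_submod (sset_sub sUU')).
  by rewrite in_sset oU'.
subst o.
case: hR oU' oV' => [[/orP[eU|eV] [-> ->]]|[eU eV sp]]; first by rewrite eU.
  by rewrite eV.
case: sp => [[-> -> _ _]|[-> -> _ _]|[-> -> nU _]]; rewrite ?mem_rcons ?in_cons ?eqxx //.
move=> _ _; apply: Or33.
move: nU; rewrite /dla_ok (cost_fits eU oA cK) /= => nU.
have := gain_lt c_gt0 nU; lra.
Qed.

End DLAStep.

Section Phase1.
Variables (R : realType) (T : finType) (f : {set T} -> R) (c : T -> R) (B : R)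
  (tie : seq T -> seq T -> T -> bool) (ord : seq T) (eps : R).
Hypotheses (f0 : f set0 = 0)
  (f_submod : forall A1 A2 : {set T}, f (A1 :|: A2) + f (A1 :&: A2) <= f A1 + f A2)
  (c_gt0 : forall e, 0 < c e).

Local Notation th j := (theta f c B ord tie eps j).
Local Notation ph j := (phase1 f c B ord tie eps j).
Hypothesis theta_gt0 : forall j, 0 < th j.
Hypothesis theta_decr : forall j, th j.+1 <= th j.

Lemma dla_pass_ind t b (Psi : seq T -> seq T -> seq T -> Prop) st :
  Psi [::] (orient b st).1 (orient b st).2 ->
  (forall p U V U' V' e,
     dla_step_spec f c B t U V U' V' e -> Psi p U V -> Psi (rcons p e) U' V') ->
  let st' := orient b (dla_pass f c B ord tie t st) in Psi ord st'.1 st'.2.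
Proof.
move=> h0 hs; rewrite /dla_pass -[ord]cat0s.
apply: (foldl_rcons_ind (P := fun p st => Psi p (orient b st).1 (orient b st).2)) => // p s e.
by apply: hs; apply: dla_stepP.
Qed.

Lemma theta_le j k : (j <= k)%N -> th k <= th j.
Proof.
elim: k => [|k IH]; first by rewrite leqn0 => /eqP->.
rewrite leq_eqVlt => /orP[/eqP->//|]; rewrite ltnS => /IH h.
exact: le_trans (theta_decr k) h.
Qed.

Lemma phase1_mono1 b j :
  [/\ f (sset (orient b (ph j)).1) <= f (sset (orient b (ph j.+1)).1),
  {subset (orient b (ph j)).1 <= (orient b (ph j.+1)).1} &
  {subset (orient b (ph j)).2 <= (orient b (ph j.+1)).2}].
Proof.
rewrite [ph j.+1]/=.
apply: (dla_pass_ind (Psi := fun _ U V => [/\ f (sset (orient b (ph j)).1) <= f (sset U),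
  {subset (orient b (ph j)).1 <= U} & {subset (orient b (ph j)).2 <= V}])); first by split.
move=> p U V U' V' e hR [h1 h2 h3].
have [k1 k2 k3] := dla_step_mono c_gt0 (theta_gt0 j) hR.
split; [exact: le_trans h1 k1 | by move=> x /h2/k2 | by move=> x /h3/k3].
Qed.

Lemma phase1_mono b j k : (j <= k)%N ->
  [/\ f (sset (orient b (ph j)).1) <= f (sset (orient b (ph k)).1),
  {subset (orient b (ph j)).1 <= (orient b (ph k)).1} &
  {subset (orient b (ph j)).2 <= (orient b (ph k)).2}].
Proof.
elim: k => [|k IH]; first by rewrite leqn0 => /eqP->; split.
rewrite leq_eqVlt => /orP[/eqP->|]; first by split.
rewrite ltnS => /IH [h1 h2 h3].
have [k1 k2 k3] := phase1_mono1 b k.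
split; [exact: le_trans h1 k1 | by move=> x /h2/k2 | by move=> x /h3/k3].
Qed.

Lemma phase1_disjoint b j :
  {in (orient b (ph j)).1, forall x, x \notin (orient b (ph j)).2}.
Proof.
elim: j => [|j IH]; first by case: b.
rewrite [ph j.+1]/=.
apply: (dla_pass_ind (Psi := fun _ U V => forall x, x \in U -> x \notin V)) => //.
by move=> p U V U' V' e hR; apply: dla_step_disjoint hR.
Qed.

Lemma phase1_density b J j : (j <= J.+1)%N ->
  th J * cost c (sset (orient b (ph j)).1) <= f (sset (orient b (ph j)).1).
Proof.
elim: j => [|j IH] hj.
  by case: b => /=; rewrite sset_nil cost0 mulr0 f0.
rewrite [ph j.+1]/=.
have hjJ : (j <= J)%N by rewrite -ltnS.
apply: (dla_pass_ind (Psi := fun _ U V => th J * cost c (sset U) <= f (sset U))).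
  by apply: IH; apply: ltnW.
move=> p U V U' V' e hR h.
apply: (dla_step_density c_gt0 _ _ hR h); [exact: theta_le | exact: ltW].
Qed.

Variable A : {set T}.
Variable K : R.
Hypothesis A_fits : forall o, o \in A -> c o + K <= B.

Lemma phase1_inv b j : cost c (sset (orient b (ph j)).1) <= K ->
  dla_inv f A (orient b (ph j)).1 (orient b (ph j)).2.
Proof.
suff : ({in (orient b (ph j)).1, forall x, x \notin (orient b (ph j)).2}) /\
  (cost c (sset (orient b (ph j)).1) <= K ->
   dla_inv f A (orient b (ph j)).1 (orient b (ph j)).2).
  by case.
elim: j => [|j IH].
  split; first by case: b.
  by move=> _; case: b; rewrite /dla_inv /= sset_nil setI0 big_set0 f0.
rewrite [ph j.+1]/=.
apply: (dla_pass_ind (Psi := fun _ U V => {in U, forall x, x \notin V} /\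
  (cost c (sset U) <= K -> dla_inv f A U V))) => //.
move=> p U V U' V' e hR [d Q]; split; first exact: dla_step_disjoint hR d.
exact: (dla_step_inv f_submod c_gt0 (theta_gt0 j) A_fits hR d Q).
Qed.

Lemma phase1_rejected b J : cost c (sset (orient b (ph J.+1)).1) <= K ->
  dla_rejected f c (th J) A ord (orient b (ph J.+1)).1 (orient b (ph J.+1)).2.
Proof.
rewrite [ph J.+1]/=.
apply: (dla_pass_ind
  (Psi := fun p U V => cost c (sset U) <= K -> dla_rejected f c (th J) A p U V)).
  by move=> _ o _.
move=> p U V U' V' e hR Q.
exact: (dla_step_rejected f_submod c_gt0 (theta_gt0 J) A_fits hR Q).
Qed.

End Phase1.

Lemma exists_crossing (R : realDomainType) (u : nat -> R) L N : L <= u 0%N -> u N < L ->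
  exists J, [/\ (J < N)%N, L <= u J & u J.+1 < L].
Proof.
move=> h0; elim: N => [|n IH] hN; first by move: hN; rewrite ltNge h0.
case: (leP L (u n)) => h; first by exists n.
by have [J [h1 h2 h3]] := IH h; exists J; split=> //; apply: ltnW.
Qed.


Section Lemma4.
Variables (R : realType) (T : finType) (f : {set T} -> R) (c : T -> R)
    (B eps : R) (ord : seq T) (tie : seq T -> seq T -> T -> bool)
    (O : {set T}) (r : T) (N : nat).
Hypotheses (f_ge0 : forall A, 0 <= f A) (f0 : f set0 = 0)
  (f_submod : forall A1 A2 : {set T}, f (A1 :|: A2) + f (A1 :&: A2) <= f A1 + f A2)
  (c_gt0 : forall e, 0 < c e) (B_gt0 : 0 < B) (c_leB : forall e, c e <= B)
  (ordE : perm_eq ord (enum T))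
  (O_cost : cost c O <= B) (O_opt : forall A, cost c A <= B -> f A <= f O)
  (eps_bounds : 0 < eps < 1) (rO : r \in O) (r_heavy : (1 - eps' eps) * B <= c r)
  (thetaN_lt : theta f c B ord tie eps N < theta_thr f c B ord tie eps).

Local Notation e' := (eps' eps).
Local Notation Gamma := (Gamma f c B ord tie).
Local Notation th j := (theta f c B ord tie eps j).
Local Notation ph j := (phase1 f c B ord tie eps j).
Local Notation S := (DLA f c B ord tie eps N).
Local Notation A := (O :\ r).
Local Notation L := ((1 - e') * f O / (6 * B)).

Lemma eps'_bounds : 0 < e' /\ e' < 1 / 14.
Proof. by move/andP: eps_bounds => [h1 h2]; rewrite /eps'; split; lra. Qed.

Lemma Gamma_le_opt : Gamma <= f O.
Proof. exact/O_opt/LA_cost. Qed.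

Lemma Gamma_gt0 : 0 < Gamma.
Proof.
rewrite lt_neqAle f_ge0 andbT; apply/eqP => Gamma0.
by move: thetaN_lt; rewrite /theta /theta_thr -Gamma0 !(mulr0, mul0r) ltxx.
Qed.

Lemma theta_gt0 j : 0 < th j.
Proof.
have [e1 e2] := eps'_bounds; have := Gamma_gt0 => G_gt0.
have /andP[eps_gt0 _] := eps_bounds.
by rewrite /theta mulr_gt0 ?exprn_gt0 ?divr_gt0 ?mulr_gt0 //; lra.
Qed.

Lemma thetaS j : th j.+1 = (1 - e') * th j.
Proof. by rewrite /theta exprS; ring. Qed.

Lemma theta_decr j : th j.+1 <= th j.
Proof.
have [e1 _] := eps'_bounds.
by rewrite thetaS mulrBl mul1r; have := mulr_gt0 e1 (theta_gt0 j); lra.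
Qed.

Lemma DLA_ge_phase1 b : f (sset (orient b (ph N)).1) <= f S.
Proof. by apply: argmax_set_ge; case: b; rewrite mem_cat !in_cons eqxx !orbT. Qed.

Lemma DLA_ge_Gamma : Gamma <= f S.
Proof. by apply: argmax_set_ge; rewrite mem_cat !in_cons eqxx. Qed.

Lemma rest_cost : cost c A <= e' * B.
Proof.
have costO : c r + cost c A = cost c O by rewrite -costU1 ?setD1K // !inE eqxx.
move: O_cost r_heavy; rewrite -costO mulrBl mul1r; lra.
Qed.

Lemma rest_fits o : o \in A -> c o + (1 - e') * B <= B.
Proof.
move=> oA; have : c o <= cost c A by rewrite -cost1; apply: (cost_sub c_gt0); rewrite sub1set.
by have := rest_cost; rewrite mulrBl mul1r => costA co; lra.
Qed.

Lemma rest_cheap o : o \in A -> c o <= B / 2.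
Proof.
move=> /rest_fits; rewrite mulrBl mul1r; have [_ e2] := eps'_bounds.
have : e' * B <= 1 / 14 * B by apply: ler_wpM2r; apply: ltW.
move: B_gt0; lra.
Qed.

Lemma theta_crossing : exists J, [/\ (J < N)%N, L <= th J & th J < f O / (6 * B)].
Proof.
have [e1 e2] := eps'_bounds; have := f_ge0 O; have := Gamma_gt0.
have := opt_le_19Gamma tie f_ge0 f0 f_submod c_gt0 B_gt0 ordE O_cost rO rest_cheap.
move=> opt19 G_gt0 opt_ge0.
have pos : 0 < 6 * e' * B by apply: mulr_gt0 => //; apply: mulr_gt0.
have th0 : L <= th 0.
  rewrite /theta expr0 mulr1 -subr_ge0.
  have -> : 19 * Gamma / (6 * e' * B) - L =
      (19 * Gamma - e' * (1 - e') * f O) / (6 * e' * B).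
    by field; rewrite ?(gt_eqF B_gt0) ?(gt_eqF e1).
  apply: divr_ge0 (ltW pos).
  have : e' * (1 - e') * f O <= f O by apply: ler_piMl => //; nra.
  lra.
have thN : th N < L.
  apply: lt_le_trans thetaN_lt _; rewrite /theta_thr -subr_ge0.
  have -> : L - Gamma * (1 - e') / (6 * B) = (1 - e') * (f O - Gamma) / (6 * B).
    by field; rewrite ?(gt_eqF B_gt0) ?(gt_eqF e1).
  have := Gamma_le_opt => G_le.
  have : 0 <= (1 - e') * (f O - Gamma) by apply: mulr_ge0; lra.
  by move/divr_ge0; apply; rewrite ltW // mulr_gt0.
have [J [JN hL hU]] := exists_crossing th0 thN.
by exists J; split=> //; move: hU; rewrite thetaS -mulrA ltr_pM2l //; lra.
Qed.

Local Notation own J b := (orient b (ph J.+1)).1.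
Local Notation other J b := (orient b (ph J.+1)).2.

Lemma phase1_le_DLA b j : (j <= N)%N ->
  f (sset (orient b (ph j)).1) <= f S /\ f (sset (orient b (ph j)).2) <= f S.
Proof.
move=> jN; have [m1 _ _] := phase1_mono c_gt0 theta_gt0 b jN.
have [m2 _ _] := phase1_mono c_gt0 theta_gt0 (~~ b) jN.
rewrite !orientN in m2.
by split; [apply: le_trans m1 _ | apply: le_trans m2 _]; rewrite -?orientN DLA_ge_phase1.
Qed.

Lemma heavy_case J b : (J < N)%N -> L <= th J ->
  (1 - e') * B < cost c (sset (own J b)) -> (1 - e') ^+ 2 / 6 * f O <= f S.
Proof.
move=> JN hL heavy; have [e1 e2] := eps'_bounds.
have [fS _] := phase1_le_DLA b JN.
have dens := phase1_density f0 c_gt0 theta_gt0 theta_decr b (J := J) (leqnn J.+1).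
have e'_le1 : 0 <= 1 - e' by lra.
have L_ge0 : 0 <= L.
  apply: divr_ge0; last by apply: mulr_ge0; [|apply: ltW].
  by apply: mulr_ge0; [|apply: f_ge0].
have : L * ((1 - e') * B) <= th J * cost c (sset (own J b)).
  by apply: ler_pM => //; [apply: mulr_ge0; [|apply: ltW] | apply: ltW].
have -> : (1 - e') ^+ 2 / 6 * f O = L * ((1 - e') * B).
  by field; rewrite ?(gt_eqF B_gt0).
by move=> h; apply: le_trans h (le_trans dens fS).
Qed.

Lemma gains_into_other J b : cost c (sset (own J b)) <= (1 - e') * B ->
  \sum_(i | (i \in A) && (i \notin own J b) && (i \in other J b))
     (f (i |: sset (own J b)) - f (sset (own J b))) <= f (sset (other J b)).
Proof.
move=> light; have := phase1_inv f0 f_submod c_gt0 theta_gt0 rest_fits light.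
apply: le_trans; rewrite (eq_bigl (fun i => i \in A :&: sset (other J b))) // => i.
rewrite !inE.
case iU : (i \in own J b); last by case: (i \in other J b); rewrite /= ?andbT ?andbF.
case iV : (i \in other J b); rewrite /= ?andbT ?andbF //.
by move: (phase1_disjoint iU); rewrite iV.
Qed.

Lemma gains_rejected J b : cost c (sset (own J b)) <= (1 - e') * B ->
  \sum_(i | (i \in A) && (i \notin own J b) && (i \notin other J b))
     (f (i |: sset (own J b)) - f (sset (own J b))) <= th J * cost c A.
Proof.
move=> light; rewrite /cost mulr_sumr.
have PA i : (i \in A) && (i \notin own J b) && (i \notin other J b) -> i \in A.
  by case/andP=> /andP[].
have th_c_ge0 i : i \in A -> 0 <= th J * c i.
  by move=> _; apply: mulr_ge0; apply: ltW; [apply: theta_gt0 | apply: c_gt0].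
apply: le_trans (ler_sum_subpred _ PA th_c_ge0).
apply: ler_sum => i /andP[/andP[iA iU] iV].
have iord : i \in ord by rewrite (perm_mem ordE) mem_enum.
have := phase1_rejected f_submod c_gt0 theta_gt0 rest_fits light iA iord.
by rewrite (negbTE iU) (negbTE iV) => -[] // /ltW.
Qed.

Lemma light_case J b : cost c (sset (own J b)) <= (1 - e') * B ->
  f (O :|: sset (own J b)) <=
    f (sset (own J b)) + f [set r] + f (sset (other J b)) + th J * cost c A.
Proof.
move=> light; have := gains_into_other light; have := gains_rejected light.
set Z := sset (own J b).
have -> : O :|: Z = Z :|: O by rewrite setUC.
have := submod_setU_le_gains f_submod Z O.
have -> : \sum_(i in O :\: Z) (f (i |: Z) - f Z) =
    \sum_(i in O :\: Z | i == r) (f (i |: Z) - f Z) +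
    (\sum_(i | (i \in A) && (i \notin own J b) && (i \in other J b)) (f (i |: Z) - f Z) +
     \sum_(i | (i \in A) && (i \notin own J b) && (i \notin other J b)) (f (i |: Z) - f Z)).
  rewrite (bigID (pred1 r)) /=; congr (_ + _).
  rewrite (bigID (fun i => i \in other J b)); congr (_ + _); apply: eq_bigl => i;
    by rewrite !inE; case: (i == r); case: (i \in O); case: (i \in own J b).
have gain_r : \sum_(i in O :\: Z | i == r) (f (i |: Z) - f Z) <= f [set r].
  case rZ : (r \in own J b).
    rewrite big_pred0 ?f_ge0 // => i; rewrite !inE.
    by case: (i =P r) => [->|]; rewrite ?rZ ?andbF.
  rewrite (big_pred1 r) => [|i]; last first.
    by rewrite !inE; case: (i =P r) => [->|]; rewrite ?rZ ?rO ?andbF.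
  have rZ' : r \notin Z by rewrite in_sset rZ.
  have := submod_gain_le f_submod (sub0set Z) rZ'.
  by rewrite setU0 f0 subr0.
move: gain_r; lra.
Qed.

Lemma lemma4_side b : (1 - e') ^+ 2 / 6 * f O <= f S \/
  exists Z : {set T}, Z \subset sset (orient b (ph N)).1 /\
    f (O :|: Z) <= 2 * f S + Num.max ((1 - e') * f O / 6) (f S + e' * f O / 6).
Proof.
have [J [JN hL hU]] := theta_crossing.
case: (leP (cost c (sset (own J b))) ((1 - e') * B)) => light; last first.
  by left; apply: heavy_case light.
right; exists (sset (own J b)); split.
  by have [_ sub _] := phase1_mono c_gt0 theta_gt0 b JN; apply: sset_sub.
have [e1 _] := eps'_bounds.
have [fU fV] := phase1_le_DLA b JN; move: fU fV.
have := light_case light; have := Gamma_ge1 f c B tie ord r; have := DLA_ge_Gamma.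
have : th J * cost c A <= e' * f O / 6.
  have -> : e' * f O / 6 = f O / (6 * B) * (e' * B) by field; rewrite gt_eqF.
  apply: ler_pM; [exact: ltW (theta_gt0 J) | exact: cost_ge0 | exact: ltW | exact: rest_cost].
have : f S + e' * f O / 6 <= Num.max ((1 - e') * f O / 6) (f S + e' * f O / 6).
  by rewrite le_max lexx orbT.
lra.
Qed.

End Lemma4.

Theorem lemma4 (R : realType) (T : finType) (f : {set T} -> R) (c : T -> R)
    (B eps : R) (ord : seq T) (tie : seq T -> seq T -> T -> bool)
    (O : {set T}) (r : T) (N : nat) :
  (forall A, 0 <= f A) -> f (finset.set0 : {set T}) = 0 ->
  (forall A1 A2 : {set T}, f (A1 :|: A2) + f (A1 :&: A2) <= f A1 + f A2) ->
  (forall e, 0 < c e) -> 0 < B -> (forall e, c e <= B) ->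
  perm_eq ord (enum T) ->
  cost c O <= B -> (forall A, cost c A <= B -> f A <= f O) ->
  0 < eps < 1 ->
  r \in O -> (forall o, o \in O -> c o <= c r) ->
  (1 - eps' eps) * B <= c r ->
  phase1_stops_at f c B ord tie eps N ->
  let S := DLA f c B ord tie eps N in
  let X := sset (phase1 f c B ord tie eps N).1 in
  let Y := sset (phase1 f c B ord tie eps N).2 in
  let opt := f O in
  let e' := eps' eps in
  (f S >= (1 - e') ^+ 2 / 6 * opt \/
   exists X' : {set T}, X' \subset X /\
     f (O :|: X') <= 2 * f S + Num.max ((1 - e') * opt / 6) (f S + e' * opt / 6)) /\
  (f S >= (1 - e') ^+ 2 / 6 * opt \/
   exists Y' : {set T}, Y' \subset Y /\
     f (O :|: Y') <= 2 * f S + Num.max ((1 - e') * opt / 6) (f S + e' * opt / 6)).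
Proof.
move=> f_ge0 f0 f_submod c_gt0 B_gt0 c_leB ordE O_cost O_opt eps01 rO _ r_heavy [_ lastN].
have side := lemma4_side f_ge0 f0 f_submod c_gt0 B_gt0 c_leB ordE O_cost O_opt eps01 rO
  r_heavy lastN.
exact: conj (side true) (side false).
Qed.
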